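(* Let $f:\mathbb{R}^n\to\mathbb{R}$ be convex, with the constants $L_{i,j}$ and $L_j$ as in the context. Then for any $j\in\{1,\dots,n\}$ and all $x',x''\in\mathcal F$, \[ \bigl\|[\nabla f(x')-\nabla_j f(x')e]-[\nabla f(x'')-\nabla_j f(x'')e]\bigr\|_{\langle j\rangle} \le L_j\,\|x'-x''\|_{\langle j\rangle}. \]
   Context: $n\ge2$; $\mathcal F=\{x\in\mathbb{R}^n: e^Tx=b,\ l_i\le x_i\le u_i\}$ with $e$ the all-ones vector, $b\in\mathbb{R}$, $l_i\in\mathbb{R}\cup\{-\infty\}$, $u_i\in\mathbb{R}\cup\{+\infty\}$, $l_i<u_i$. $f$ is continuously differentiable with Lipschitz continuous gradient on $\mathbb{R}^n$. For $i\ne j$, $L_{i,j}>0$ are constants such that for every $x\in\mathbb{R}^n$ and $s,t\in\mathbb{R}$, $|\nabla f(x+s(e_i-e_j))^T(e_i-e_j)-\nabla f(x+t(e_i-e_j))^T(e_i-e_j)|\le L_{i,j}|s-t|$ ($e_i$ the $i$th unit vector); $L_{i,i}=0$. $L_j=\sum_{i=1}^nL_{i,j}$. For $j$ fixed, $\langle x,y\rangle_j=\sum_{i\ne j}x_iy_i$ and $\|x\|_{\langle j\rangle}=\sqrt{\langle x,x\rangle_j}$. *)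

From HB Require Import structures.
From mathcomp Require Import all_boot all_order all_algebra.
From mathcomp Require Import all_classical all_reals all_analysis.
Set Implicit Arguments.
Unset Strict Implicit.
Unset Printing Implicit Defensive.
Import Order.TTheory GRing.Theory Num.Theory.
Import numFieldNormedType.Exports.
Local Open Scope ring_scope.

Definition dotv {R : realType} {n : nat} (x y : 'rV[R]_n) : R :=
  \sum_(k < n) x 0 k * y 0 k.

Definition unitv {R : realType} {n : nat} (i : 'I_n) : 'rV[R]_n :=
  \row_(k < n) (if k == i then 1 else 0).

Definition onesv {R : realType} {n : nat} : 'rV[R]_n := \row_(k < n) 1.

Definition dotj {R : realType} {n : nat} (j : 'I_n) (x y : 'rV[R]_n) : R :=
  \sum_(i < n | i != j) x 0 i * y 0 i.
Definition normj {R : realType} {n : nat} (j : 'I_n) (x : 'rV[R]_n) : R :=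
  Num.sqrt (dotj j x x).

Definition feasible {R : realType} {n : nat} (b : R) (l u : 'I_n -> \bar R)
  (x : 'rV[R]_n) : Prop :=
  dotv onesv x = b /\ forall i, (l i <= (x 0 i)%:E)%E /\ ((x 0 i)%:E <= u i)%E.

Definition convex_fun {R : realType} {n : nat} (f : 'rV[R]_n -> R) : Prop :=
  forall (x y : 'rV[R]_n) (t : R), 0 <= t <= 1 ->
    f (t *: x + (1 - t) *: y) <= t * f x + (1 - t) * f y.

From HB Require Import structures.
From mathcomp Require Import all_boot all_order all_algebra.
From mathcomp Require Import all_classical all_reals all_analysis.
From mathcomp Require Import ring lra.
Import Order.TTheory GRing.Theory Num.Theory.
Import numFieldNormedType.Exports.
Local Open Scope classical_set_scope.
Local Open Scope ring_scope.

(* Write [redj j g = g - g_j e], so that grad f(x)^T v = <redj j (grad f x), v>_j whenever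
   e^T v = 0.  Such a v is the combination sum_i v_i (e_i - e_j), i.e. a convex combination
   with weights L_ij / L_j of the steps (L_j v_i / L_ij)(e_i - e_j).  Convexity and the
   one-dimensional descent lemma along each direction e_i - e_j therefore give the
   smoothness bound f(x + v) <= f(x) + <redj j (grad f x), v>_j + L_j/2 ||v||_j^2 on the
   hyperplane e^T v = 0.  Combined with the first-order convexity inequality, the classical
   co-coercivity argument gives ||r||_j^2 <= L_j <r, x' - x''>_j for the difference r of the
   reduced gradients at feasible x', x'', and the claim follows by Cauchy-Schwarz. *)

Lemma derive_lipschitz_quadratic_ub {R : realType} {phi dphi : R -> R} (c : R) :
  (forall t : R, is_derive t (1 : R) phi (dphi t)) ->
  (forall t, `|dphi t - dphi 0| <= c * `|t|) ->
  forall s, phi s <= phi 0 + s * dphi 0 + c / 2 * s ^+ 2.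
Proof.
move=> dphiP lip s.
pose psi t := phi t - (dphi 0 * t + c / 2 * t ^+ 2).
have dpsi t : is_derive t (1 : R) psi (dphi t - (dphi 0 + c * t)).
  apply: is_derive_eq.
  rewrite -[_%:A]/(dphi 0 * 1) -[t%:A]/(t * 1) -[(c / 2) *: _]/(c / 2 * _); lra.
have psi_cont u v : {within `[u, v], continuous psi}.
  by apply: derivable_within_continuous => t _; case: (dpsi t).
(* [psi] is nondecreasing left of 0 and nonincreasing right of 0. *)
suff : psi s <= psi 0.
  by rewrite /psi expr0n /= !mulr0 addr0 subr0; lra.
case: (ltgtP s 0) => [s_lt0|s_gt0|->] //.
- have [t /andP[]] := MVT s_lt0 (fun t _ => dpsi t) (psi_cont _ _).
  rewrite !bnd_simp => st t0 E.
  rewrite -subr_ge0 E mulr_ge0 //; last by lra.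
  by have := lip t; rewrite (ltr0_norm t0) ler_norml; lra.
- have [t /andP[]] := MVT s_gt0 (fun t _ => dpsi t) (psi_cont _ _).
  rewrite !bnd_simp => t0 ts E.
  rewrite -subr_le0 E mulr_le0_ge0 //; last by lra.
  by have := lip t; rewrite (gtr0_norm t0) ler_norml; lra.
Qed.

Section Forms.
Context {R : realType} {n : nat}.
Implicit Types (g v x : 'rV[R]_n) (i j : 'I_n).

Lemma dotv_bilinear : bilinear_for *%R *%R (@dotv R n).
Proof.
by split=> a c b d; rewrite /dotv /= mulr_sumr -big_split;
  apply: eq_bigr => i _; rewrite !mxE /=; ring.
Qed.

HB.instance Definition _ :=
  bilinear_isBilinear.Build R 'rV[R]_n 'rV[R]_n R *%R *%R (@dotv R n) dotv_bilinear.

Lemma dotj_bilinear j : bilinear_for *%R *%R (@dotj R n j).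
Proof.
by split=> a c b d; rewrite /dotj /= mulr_sumr -big_split;
  apply: eq_bigr => i _; rewrite !mxE /=; ring.
Qed.

HB.instance Definition _ j :=
  bilinear_isBilinear.Build R 'rV[R]_n 'rV[R]_n R *%R *%R (@dotj R n j) (dotj_bilinear j).

Lemma dotjC j x v : dotj j x v = dotj j v x.
Proof. by apply: eq_bigr => i _; rewrite mulrC. Qed.

Lemma dotj_ge0 j v : 0 <= dotj j v v.
Proof. by apply: sumr_ge0 => i _; rewrite -expr2 sqr_ge0. Qed.

Lemma dotv_unitv g i : dotv g (unitv i) = g 0 i.
Proof.
rewrite /dotv (bigD1 i) //= big1 ?addr0 => [|k /negPf ki]; rewrite mxE ?ki ?mulr0 //.
by rewrite eqxx mulr1.
Qed.

Lemma dotj_unitv j g : dotj j g (unitv j) = 0.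
Proof. by rewrite /dotj big1 // => i /negPf ij; rewrite mxE ij mulr0. Qed.

Lemma dotv_onesv v : dotv onesv v = \sum_i v 0 i.
Proof. by apply: eq_bigr => i _; rewrite mxE mul1r. Qed.

Lemma sum_unitv v : \sum_i v 0 i *: unitv i = v.
Proof.
apply/rowP => k; rewrite summxE (bigD1 k) //= big1 ?addr0 => [|i /negPf ik].
  by rewrite !mxE eqxx mulr1.
by rewrite !mxE eq_sym ik mulr0.
Qed.

Definition redj j g : 'rV[R]_n := g - g 0 j *: onesv.

Lemma redjE j g i : redj j g 0 i = g 0 i - g 0 j.
Proof. by rewrite !mxE mulr1. Qed.

Lemma dotv_unitvB g i j : dotv g (unitv i - unitv j) = redj j g 0 i.
Proof. by rewrite linearBr /= !dotv_unitv redjE. Qed.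

Lemma dotv_hyperplane j g {v} : dotv onesv v = 0 -> dotv g v = dotj j (redj j g) v.
Proof.
move=> v0; have -> : dotj j (redj j g) v = dotv (redj j g) v.
  by rewrite /dotv (bigD1 j) //= redjE subrr mul0r add0r.
by rewrite linearBl linearZl /= v0 mulr0 subr0.
Qed.

Lemma hyperplane_sum_unitvB j {v} :
  dotv onesv v = 0 -> \sum_i v 0 i *: (unitv i - unitv j) = v.
Proof.
rewrite dotv_onesv => v0.
by under eq_bigr do rewrite scalerBr; rewrite sumrB -scaler_suml v0 scale0r subr0 sum_unitv.
Qed.

Lemma normj_le_of_dotj j (c : R) x v :
  0 <= c -> dotj j x x <= c * dotj j x v -> normj j x <= c * normj j v.
Proof.
move=> c0 le_xx.
(* [0 <= ||x - c v||_j^2] stands in for Cauchy-Schwarz. *)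
have := dotj_ge0 j (x - c *: v).
rewrite !(linearBl, linearBr, linearZl, linearZr) /= (dotjC j v x) => sq_ge0.
have le_sq : dotj j x x <= c ^+ 2 * dotj j v v by nra.
rewrite /normj -(ger0_norm c0) -sqrtr_sqr -sqrtrM ?sqr_ge0 //.
exact: ler_wsqrtr.
Qed.

End Forms.

Section SmoothConvex.
Context {R : realType} {n : nat} {f : 'rV[R]_n -> R} {grad : 'rV[R]_n -> 'rV[R]_n}.
Hypothesis f_grad : forall x, differentiable f x /\ forall v, 'd f x v = dotv (grad x) v.

Lemma is_derive_line x w t :
  is_derive t (1 : R) (fun s => f (x + s *: w)) (dotv (grad (x + t *: w)) w).
Proof.
have E : (fun h : R => h^-1 *: (f (x + (h *: 1 + t) *: w) - f (x + t *: w)))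
       = (fun h : R => h^-1 *: (f (h *: w + (x + t *: w)) - f (x + t *: w))).
  apply/funext => h; congr (_ *: (f _ - _)).
  by rewrite -[h *: 1]/(h * 1) mulr1 scalerDl addrCA addrA addrC.
have [fx_diff fx_grad] := f_grad (x + t *: w).
split; first by rewrite /derivable /= E; apply: diff_derivable.
by rewrite /derive /= E -/(derive f _ w) deriveE.
Qed.

Lemma line_quadratic_ub x w (c : R) :
  (forall t, `|dotv (grad (x + t *: w)) w - dotv (grad x) w| <= c * `|t|) ->
  forall s, f (x + s *: w) <= f x + s * dotv (grad x) w + c / 2 * s ^+ 2.
Proof.
move=> lip s; have := derive_lipschitz_quadratic_ub c (is_derive_line x w) _ s.
by rewrite scale0r addr0; apply.
Qed.

Hypothesis f_convex : convex_fun f.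

Lemma convex_jensen {I : eqType} (s : seq I) {w : I -> R} {p : I -> 'rV[R]_n} :
  (forall i, 0 <= w i) -> \sum_(i <- s) w i = 1 ->
  f (\sum_(i <- s) w i *: p i) <= \sum_(i <- s) w i * f (p i).
Proof.
elim: s w => [|a s IH] w w_ge0; first by rewrite big_nil => /esym/eqP; rewrite oner_eq0.
rewrite !big_cons; set S := \sum_(i <- s) w i => wS.
have S_ge0 : 0 <= S by rewrite sumr_ge0.
have [S0|S_neq0] := eqVneq S 0.
  have w0 : {in s, forall i, w i = 0}.
    by move=> i si; move/eqP: S0; rewrite psumr_eq0 // => /allP/(_ i si)/eqP.
  rewrite S0 addr0 in wS.
  by rewrite !big_seq !big1 => [|i /w0->|i /w0->]; rewrite ?wS ?scale1r ?mul1r ?addr0 ?mul0r ?scale0r.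
have S_gt0 : 0 < S by rewrite lt_def S_neq0.
have IHs := IH (fun i => w i / S) (fun i => divr_ge0 (w_ge0 i) S_ge0).
rewrite -mulr_suml divff // in IHs; have {}IHs := IHs erefl.
have -> : \sum_(i <- s) w i *: p i = S *: \sum_(i <- s) (w i / S) *: p i.
  by rewrite scaler_sumr; apply: eq_bigr => i _; rewrite scalerA mulrCA divff ?mulr1.
have -> : \sum_(i <- s) w i * f (p i) = S * \sum_(i <- s) (w i / S) * f (p i).
  by rewrite mulr_sumr; apply: eq_bigr => i _; rewrite mulrA mulrCA divff ?mulr1.
have w_a : w a = 1 - S by rewrite -wS addrK.
have := f_convex (p a) (\sum_(i <- s) (w i / S) *: p i) (w a).
rewrite w_a subKr => /(_ _)/le_trans; apply; first by rewrite -w_a w_ge0 /=; lra.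
by rewrite lerD2l ler_wpM2l.
Qed.

Lemma convex_gradient_ineq x v : f x + dotv (grad x) v <= f (x + v).
Proof.
have [fx_diff fx_grad] := f_grad x.
rewrite -fx_grad -deriveE // addrC -lerBrDr.
set q := fun h : R => h^-1 *: ((f \o shift x) (h *: v) - f x).
have q_cvg : cvg (q @ 0^') by apply: diff_derivable.
rewrite /derive -/q (cvg_at_rightE q 0 q_cvg).
apply: limr_le; first exact: cvgP (cvg_dnbhs_at_right q_cvg).
near=> h.
have h_gt0 : 0 < h by near: h; exact: nbhs_right_gt.
have h_le1 : h <= 1 by near: h; exact: (@nbhs_right_le R 0 1 ltr01).
rewrite /q /= -[h^-1 *: _]/(h^-1 * _) ler_pdivrMl //.
have := f_convex (x + v) x h; rewrite ltW ?h_le1 //= => /(_ isT).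
have -> : h *: (x + v) + (1 - h) *: x = h *: v + x.
  by rewrite scalerDr scalerBl scale1r addrC addrA subrK addrC.
lra.
Unshelve. all: end_near.
Qed.

Variables (L : 'I_n -> 'I_n -> R) (j : 'I_n).
Hypothesis L_gt0 : forall i, i != j -> 0 < L i j.
Hypothesis L_jj : L j j = 0.
Hypothesis L_lip : forall i, i != j -> forall x s t,
  `|dotv (grad (x + s *: (unitv i - unitv j))) (unitv i - unitv j)
    - dotv (grad (x + t *: (unitv i - unitv j))) (unitv i - unitv j)| <= L i j * `|s - t|.
Local Notation Lj := (\sum_(i < n) L i j).
Hypothesis Lj_gt0 : 0 < Lj.

Lemma hyperplane_quadratic_ub x {v} : dotv onesv v = 0 ->
  f (x + v) <= f x + dotj j (redj j (grad x)) v + Lj / 2 * dotj j v v.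
Proof.
move=> v0.
pose w i : 'rV[R]_n := unitv i - unitv j.
pose lam i := L i j / Lj.
pose s i := Lj * v 0 i / L i j.
(* [s j] is the junk value [Lj * v_j / 0 = 0], harmless since [w j = 0] and [lam j = 0]. *)
have Lj_neq0 : Lj != 0 by rewrite gt_eqF.
have lam_ge0 i : 0 <= lam i.
  rewrite divr_ge0 ?(ltW Lj_gt0) //.
  by have [->|ij] := eqVneq i j; [rewrite L_jj | exact/ltW/L_gt0].
have lam_sum : \sum_i lam i = 1 by rewrite -mulr_suml divff.
have comb : \sum_i lam i *: (x + s i *: w i) = x + v.
  under eq_bigr do rewrite scalerDr.
  rewrite big_split /= -scaler_suml lam_sum scale1r -(hyperplane_sum_unitvB j v0).
  congr (x + _); apply: eq_bigr => i _; rewrite scalerA.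
  have [->|ij] := eqVneq i j; first by rewrite /w subrr !scaler0.
  by congr (_ *: _); rewrite /lam /s; field; rewrite Lj_neq0 gt_eqF ?L_gt0.
have line i :
    f (x + s i *: w i) <= f x + s i * redj j (grad x) 0 i + L i j / 2 * s i ^+ 2.
  rewrite -dotv_unitvB; apply: line_quadratic_ub => t.
  have [->|ij] := eqVneq i j.
    by rewrite /w subrr !linear0r subrr normr0 L_jj mul0r.
  by have := L_lip _ ij x t 0; rewrite scale0r addr0 subr0.
rewrite -comb; apply: le_trans (convex_jensen _ lam_ge0 lam_sum) _.
apply: le_trans (ler_sum _ (fun i _ => ler_wpM2l (lam_ge0 i) (line i))) _.
have -> : \sum_i lam i * (f x + s i * redj j (grad x) 0 i + L i j / 2 * s i ^+ 2)
    = \sum_i (lam i * f x + (if i != j then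
        redj j (grad x) 0 i * v 0 i + Lj / 2 * (v 0 i * v 0 i) else 0)).
  apply: eq_bigr => i _; have [->|ij] := eqVneq i j.
    by rewrite /lam L_jj !mul0r addr0.
  by rewrite /= /lam /s; field; rewrite Lj_neq0 gt_eqF ?L_gt0.
rewrite big_split /= -mulr_suml lam_sum mul1r -big_mkcond big_split /= -mulr_sumr.
by rewrite addrA.
Qed.

Lemma gradient_gap_lb x y : dotv onesv (y - x) = 0 ->
  dotj j (redj j (grad y) - redj j (grad x)) (redj j (grad y) - redj j (grad x))
  <= 2 * Lj * (f y - f x - dotv (grad x) (y - x)).
Proof.
move=> yx0; set r := redj j (grad y) - redj j (grad x).
(* [u] agrees with [r] off coordinate [j] and lies in the hyperplane, so the step
   [y - u / Lj] stays admissible for the smoothness bound at [y]. *)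
pose u := r - dotv onesv r *: unitv j.
have u0 : dotv onesv u = 0 by rewrite linearBr linearZr /= dotv_unitv mxE mulr1 subrr.
have dotj_u g : dotj j g u = dotj j g r.
  by rewrite linearBr linearZr /= dotj_unitv mulr0 subr0.
have dotj_uu : dotj j u u = dotj j r r by rewrite dotj_u dotjC dotj_u.
have lower := convex_gradient_ineq x (y - x - Lj^-1 *: u).
rewrite addrA [x + _]addrC subrK linearBr linearZr /= in lower.
rewrite (dotv_hyperplane j _ u0) dotj_u in lower.
have step0 : dotv onesv (- (Lj^-1 *: u)) = 0.
  by rewrite linearNr linearZr /= u0 mulr0 oppr0.
have step_lin : dotj j (redj j (grad y)) (- (Lj^-1 *: u))
    = - (Lj^-1 * dotj j (redj j (grad y)) r).
  by rewrite linearNr linearZr /= dotj_u.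
have step_sq : dotj j (- (Lj^-1 *: u)) (- (Lj^-1 *: u)) = Lj^-1 * (Lj^-1 * dotj j r r).
  by rewrite linearNl linearNr linearZl linearZr /= opprK dotj_uu.
have upper := hyperplane_quadratic_ub y step0.
rewrite step_lin step_sq in upper.
have r_diff : dotj j r r = dotj j (redj j (grad y)) r - dotj j (redj j (grad x)) r.
  by rewrite {1}/r linearBl.
have half : Lj / 2 * (Lj^-1 * (Lj^-1 * dotj j r r)) = Lj^-1 * dotj j r r / 2.
  by field; rewrite gt_eqF.
have gap : Lj^-1 * dotj j r r / 2 <= f y - f x - dotv (grad x) (y - x).
  move: lower upper; rewrite half {1 2}r_diff mulrBr; lra.
have -> : dotj j r r = 2 * Lj * (Lj^-1 * dotj j r r / 2) by field; rewrite gt_eqF.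
by rewrite ler_wpM2l // mulr_ge0 // ltW.
Qed.

Lemma redj_grad_cocoercive x y : dotv onesv (y - x) = 0 ->
  dotj j (redj j (grad y) - redj j (grad x)) (redj j (grad y) - redj j (grad x))
  <= Lj * dotj j (redj j (grad y) - redj j (grad x)) (y - x).
Proof.
move=> yx0; have xy0 : dotv onesv (x - y) = 0 by rewrite -opprB linearNr /= yx0 oppr0.
have gap_xy := gradient_gap_lb x y yx0; have gap_yx := gradient_gap_lb y x xy0.
rewrite -[redj j (grad x) - _]opprB linearNl linearNr /= opprK in gap_yx.
rewrite -[x - y]opprB linearNr /= in gap_yx.
rewrite [X in _ <= _ * X]linearBl /= -!(dotv_hyperplane j _ yx0).
lra.
Qed.

End SmoothConvex.

Theorem lemma3 (R : realType) (n : nat) (hn : (2 <= n)%N)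
  (b : R) (l u : 'I_n -> \bar R)
  (hl : forall i, l i != +oo%E) (hu : forall i, u i != -oo%E)
  (hlu : forall i, (l i < u i)%E)
  (f : 'rV[R]_n -> R) (grad : 'rV[R]_n -> 'rV[R]_n)
  (hdiff : forall x, differentiable f x /\ forall v, 'd f x v = dotv (grad x) v)
  (hgcont : continuous grad)
  (hlip : exists K : R, forall x y, `|grad x - grad y| <= K * `|x - y|)
  (hconv : convex_fun f)
  (L : 'I_n -> 'I_n -> R)
  (hLpos : forall i j, i != j -> 0 < L i j)
  (hLdiag : forall i, L i i = 0)
  (hLij : forall i j, i != j -> forall (x : 'rV[R]_n) (s t : R),
     `| dotv (grad (x + s *: (unitv i - unitv j))) (unitv i - unitv j)
      - dotv (grad (x + t *: (unitv i - unitv j))) (unitv i - unitv j) |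
     <= L i j * `|s - t|) :
  forall (j : 'I_n) (x' x'' : 'rV[R]_n),
    feasible b l u x' -> feasible b l u x'' ->
    normj j ((grad x' - grad x' 0 j *: onesv) - (grad x'' - grad x'' 0 j *: onesv))
      <= (\sum_(i < n) L i j) * normj j (x' - x'').
Proof.
(* Only the constraint e^T x = b of the feasible set matters. *)
move=> j x' x'' [sum_x' _] [sum_x'' _].
have [k kj] : exists k, k \in predC1 j.
  by apply/card_gt0P; rewrite cardC1 card_ord -ltnS (ltn_predK hn).
have L_ge0 i : 0 <= L i j.
  by have [->|ij] := eqVneq i j; [rewrite hLdiag | exact/ltW/hLpos].
have Lj_gt0 : 0 < \sum_(i < n) L i j.
  by rewrite (bigD1 k) //= ltr_wpDr ?sumr_ge0 ?hLpos.
have diff0 : dotv onesv (x' - x'') = 0 by rewrite linearBr /= sum_x' sum_x'' subrr.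
apply: normj_le_of_dotj (ltW Lj_gt0) _.
exact: redj_grad_cocoercive hdiff hconv L j (hLpos ^~ j) (hLdiag j) (hLij ^~ j) Lj_gt0 _ _ diff0.
Qed.
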